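(* Let $n,m$ be positive integers and $\alpha_1,\dots,\alpha_n$ the simple roots of type $A_n$. There exists a bijection $\varphi_n:\mathcal{R}^m_n\to\mathcal{P}^m_n$ such that for every $i\in\{1,\dots,n\}$ and every $R\in\mathcal{R}^m_n$, the hyperplane $H_{\alpha_i,m}$ is a separating wall of $R$ if and only if the $i$-th part of the partition $\varphi_n(R)$ equals $(n-i+1)m$.
   Context: Type $A_n$: $V=\{x\in\mathbb{R}^{n+1}:\sum x_i=0\}$ with standard inner product; positive roots $\alpha_{ij}=\varepsilon_i-\varepsilon_{j+1}$ ($1\le i\le j\le n$), simple roots $\alpha_i=\varepsilon_i-\varepsilon_{i+1}$. $H_{\alpha,k}=\{v\in V:\langle v,\alpha\rangle=k\}$. $\mathrm{Cat}^m(A_n)$ is the arrangement of the $H_{\alpha,k}$, $\alpha$ positive, $0\le k\le m$. $\mathcal{R}^m_n$ is the set of dominant regions (connected components of the complement contained in $\{v:\langle v,\alpha\rangle\ge 0\ \forall\alpha>0\}$). A separating wall of a region $R$ is a hyperplane of the arrangement supporting a facet of $R$ such that $R$ and the origin lie on different sides of it. $\mathcal{P}^m_n$ is the set of integer partitions $\lambda=(\lambda_1,\dots,\lambda_n)$ with $\lambda_1\ge\lambda_2\ge\cdots\ge\lambda_n\ge0$ and $\lambda_i\le m(n-i+1)$ for all $i$. *)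

From HB Require Import structures.
From mathcomp Require Import all_boot all_order all_algebra.
From mathcomp Require Import all_classical all_reals all_analysis.
Set Implicit Arguments. Unset Strict Implicit. Unset Printing Implicit Defensive.
Import Order.TTheory GRing.Theory Num.Theory.
Import numFieldNormedType.Exports.
Local Open Scope classical_set_scope.
Local Open Scope ring_scope.

Section Arrangement.
Variable R : realType.
Variable n : nat. (* type A_n; ambient space R^(n+1) *)

Definition co (v : 'rV[R]_(n.+1)) (a : 'I_n.+1) : R := v ord0 a.

Definition Vspace : set 'rV[R]_(n.+1) := [set v | \sum_(a < n.+1) co v a = 0].

(* positive roots are eps_a - eps_b with a < b (0-indexed);
   <v, eps_a - eps_b> = v_a - v_b (standard inner product) *)
Definition proot (v : 'rV[R]_(n.+1)) (a b : 'I_n.+1) : R := co v a - co v b.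

Definition hyp (a b : 'I_n.+1) (k : nat) : set 'rV[R]_(n.+1) :=
  [set v | Vspace v /\ proot v a b = k%:R].

Definition in_cat (m : nat) (a b : 'I_n.+1) (k : nat) : Prop :=
  (a < b)%N /\ (k <= m)%N.

Definition cat_complement (m : nat) : set 'rV[R]_(n.+1) :=
  [set v | Vspace v /\ forall a b k, in_cat m a b k -> ~ hyp a b k v].

Definition is_region (m : nat) (Rg : set 'rV[R]_(n.+1)) : Prop :=
  exists2 x, cat_complement m x & Rg = connected_component (cat_complement m) x.

Definition dominant_cone : set 'rV[R]_(n.+1) :=
  [set v | forall a b : 'I_n.+1, (a < b)%N -> 0 <= proot v a b].

Definition is_dominant_region (m : nat) (Rg : set 'rV[R]_(n.+1)) : Prop :=
  is_region m Rg /\ Rg `<=` dominant_cone.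

(* H supports a facet of Rg: H meets the closure of Rg in a set with
   nonempty relative interior in H (i.e. an (n-1)-dimensional face). *)
Definition supports_facet (Rg H : set 'rV[R]_(n.+1)) : Prop :=
  exists2 p, H p & exists2 U, nbhs p U & (U `&` H) `<=` closure Rg.

Definition separating_wall (m : nat) (Rg : set 'rV[R]_(n.+1))
    (a b : 'I_n.+1) (k : nat) : Prop :=
  [/\ in_cat m a b k, supports_facet Rg (hyp a b k) &
      forall x, Rg x -> (proot x a b - k%:R) * (proot 0 a b - k%:R) < 0].

Definition dominant_regions (m : nat) :=
  {Rg : set 'rV[R]_(n.+1) | is_dominant_region m Rg}.

End Arrangement.

(* simple root alpha_{i+1} = eps_i - eps_{i+1} (0-indexed i : 'I_n) *)
Definition sroot_l (n : nat) (i : 'I_n) : 'I_n.+1 := widen_ord (leqnSn n) i.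
Definition sroot_r (n : nat) (i : 'I_n) : 'I_n.+1 := lift ord0 i.

(* P^m_n: lambda_1 >= ... >= lambda_n >= 0, lambda_i <= m(n-i+1);
   stored 0-indexed: lam j = lambda_{j+1}, bound m (n - j). *)
Definition is_bounded_partition (n m : nat) (lam : {ffun 'I_n -> nat}) : bool :=
  [forall i : 'I_n, forall j : 'I_n, (i <= j)%N ==> (lam j <= lam i)%N] &&
  [forall i : 'I_n, (lam i <= muln m (n - i))%N].

Definition bounded_partitions (n m : nat) :=
  {lam : {ffun 'I_n -> nat} | @is_bounded_partition n m lam}.

From HB Require Import structures.
From mathcomp Require Import all_boot all_order all_algebra.
From mathcomp Require Import all_classical all_reals all_analysis.
From mathcomp Require Import ring lra zify.
Set Implicit Arguments. Unset Strict Implicit. Unset Printing Implicit Defensive.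
Import Order.TTheory GRing.Theory Num.Theory.
Import numFieldNormedType.Exports.
Local Open Scope classical_set_scope.
Local Open Scope ring_scope.

(* Two points of the complement of Cat^m(A_n) lie in the same region iff they lie
   on the same side of every hyperplane: a side class is convex, and a connected
   component cannot meet both open sides of a hyperplane.  For a dominant point x
   and a < c, the hyperplanes H_{e_a - e_c, k} (1 <= k <= m) lying below x form
   row a, and the partition of the region lists the row sizes.  Row a is an
   initial segment of the pairs (c, k) ordered by x_c + k, an order fixed by the
   rows below a; so the sizes determine the rows from the bottom up, hence the
   region.  Conversely the rows can be realised from the bottom up by placing x_a
   in the right gap of the finite set of heights x_c + k.  Finally H_{alpha_i, m}
   separates the region from 0 iff x_i - x_{i+1} > m iff row i is full, and it
   supports a facet because moving x along the fundamental coweight omega_i only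
   changes the roots whose support contains alpha_i. *)

Lemma open_disjoint_separated (T : topologicalType) (A B : set T) :
  open A -> open B -> A `&` B = set0 -> separated A B.
Proof.
move=> oA oB AB0.
have clI (U W : set T) : open W -> U `&` W = set0 -> closure U `&` W = set0.
  move=> oW UW0; apply/seteqP; split => // z [clz Wz].
  have [w [Uw Ww]] := clz W (open_nbhs_nbhs (conj oW Wz)).
  by have : (U `&` W) w by []; rewrite UW0.
by split; [exact: clI | rewrite setIC; apply: clI => //; rewrite setIC].
Qed.

Lemma segment_same_side (R : realDomainType) (k p q t : R) : 0 <= t <= 1 ->
  p != k -> q != k -> (k < p) = (k < q) ->
  (k < p + t * (q - p)) = (k < p) /\ p + t * (q - p) != k.
Proof.
move=> /andP[t0 t1]; rewrite !neq_lt => /orP[pk|kp] /orP[qk|kq];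
  rewrite ?(lt_gtF pk) ?(lt_gtF qk) ?pk ?qk ?kp ?kq // => _.
- have h1 : 0 <= (1 - t) * (k - p) by apply: mulr_ge0; lra.
  have h2 : 0 <= t * (k - q) by apply: mulr_ge0; lra.
  have h : p + t * (q - p) < k by nra.
  by rewrite (lt_gtF h) h.
- have h1 : 0 <= (1 - t) * (p - k) by apply: mulr_ge0; lra.
  have h2 : 0 <= t * (q - k) by apply: mulr_ge0; lra.
  have h : k < p + t * (q - p) by nra.
  by rewrite h orbT.
Qed.

Section Regions.
Variables (R : realType) (n m : nat).
Local Notation V := 'rV[R]_(n.+1).
Local Notation C := (@cat_complement R n m).

Definition same_sides (x y : V) := forall (a b : 'I_n.+1) (k : nat),
  (a < b)%N -> (k <= m)%N -> (k%:R < proot x a b) = (k%:R < proot y a b).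

Lemma complement_proot_neq x (a b : 'I_n.+1) k :
  C x -> (a < b)%N -> (k <= m)%N -> proot x a b != k%:R.
Proof. by move=> [Vx Cx] ab km; apply/eqP => e; apply: (Cx a b k). Qed.

Lemma continuous_proot (a b : 'I_n.+1) : continuous (fun y : V => proot y a b).
Proof. by move=> y; apply: continuousB; apply: coord_continuous. Qed.

Lemma component_same_sides x y : connected_component C x y -> same_sides x y.
Proof.
move=> cxy a b k ab km.
pose A := (fun z : V => proot z a b) @^-1` [set r | k%:R < r].
pose B := (fun z : V => proot z a b) @^-1` [set r | r < k%:R].
have oA : open A by apply: open_comp => // z _; exact: continuous_proot.
have oB : open B by apply: open_comp => // z _; exact: continuous_proot.
have AB0 : A `&` B = set0.
  by apply/seteqP; split => // z [/= h1 h2]; move: (lt_trans h1 h2); rewrite ltxx.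
have cover : connected_component C x `<=` A `|` B.
  move=> z /connected_component_sub Cz.
  by have := complement_proot_neq Cz ab km; rewrite neq_lt => /orP[]; [right|left].
have xx : connected_component C x x.
  by case: cxy => D [Dx DC _ _]; apply: connected_component_refl; exact: DC.
have [sA|sB] := connected_subset (open_disjoint_separated oA oB AB0) cover
  (@component_connected _ C x).
- by rewrite (sA _ xx) (sA _ cxy).
- by rewrite (lt_gtF (sB _ xx)) (lt_gtF (sB _ cxy)).
Qed.

Lemma co_addZ (x y : V) s c : co (x + s *: y) c = co x c + s * co y c.
Proof. by rewrite /co !mxE. Qed.

Lemma proot_addZ (x y : V) s a b :
  proot (x + s *: y) a b = proot x a b + s * proot y a b.
Proof. by rewrite /proot !co_addZ; ring. Qed.

Lemma Vspace_addZ (x y : V) s : Vspace x -> Vspace y -> Vspace (x + s *: y).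
Proof.
rewrite /Vspace /= => Vx Vy; under eq_bigr do rewrite co_addZ.
by rewrite big_split /= -mulr_sumr Vx Vy mulr0 addr0.
Qed.

Lemma complement_of_sides x y : C x -> Vspace y ->
  (forall (a b : 'I_n.+1) k, (a < b)%N -> (k <= m)%N ->
     (k%:R < proot y a b) = (k%:R < proot x a b) /\ proot y a b != k%:R) ->
  C y /\ same_sides x y.
Proof.
move=> Cx Vy sides; split => [|a b k ab km]; last by rewrite (sides a b k ab km).1.
by split=> // a b k [ab km] [_ e]; move: (sides a b k ab km).2; rewrite e eqxx.
Qed.

Lemma segment_complement x y t : C x -> C y -> same_sides x y -> 0 <= t <= 1 ->
  C (x + t *: (y - x)) /\ same_sides x (x + t *: (y - x)).
Proof.
move=> Cx Cy sxy t01; apply: (complement_of_sides Cx).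
  apply: Vspace_addZ Cx.1 _; rewrite -scaleN1r; exact: Vspace_addZ Cy.1 Cx.1.
move=> a b k ab km; rewrite proot_addZ.
have -> : proot (y - x) a b = proot y a b - proot x a b by rewrite /proot /co !mxE; ring.
by apply: segment_same_side; rewrite ?(complement_proot_neq _ ab km) ?(sxy a b k ab km).
Qed.

Lemma same_sides_component x y : C x -> C y -> same_sides x y ->
  connected_component C x y.
Proof.
move=> Cx Cy sxy.
pose seg := [set x + t *: (y - x) | t in `[0, 1]].
have seg_of (t : R) : 0 <= t <= 1 -> seg (x + t *: (y - x)).
  by move=> t01; exists t => //=; rewrite in_itv.
apply: (connected_component_max (B := seg)).
- by rewrite -[x in seg x]addr0 -(scale0r (y - x)); apply: seg_of; rewrite lexx ler01.
- move=> _ [t t01 <-]; move: t01; rewrite /= in_itv /= => t01.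
  exact: (segment_complement Cx Cy sxy t01).1.
- apply: (@connected_continuous_connected R V `[0, 1] (fun t => x + t *: (y - x))).
    exact: segment_connected.
  apply: continuous_subspaceT => t.
  have := @continuousD R V R (fun=> x) (fun s => s *: (y - x)) t (@cst_continuous _ _ x t)
    (@continuousZr_tmp R V R id (y - x) t (fun _ h => h)).
  by [].
- by rewrite -[y in seg y](addrNK x) addrC -[y - x]scale1r; apply: seg_of; rewrite ler01 lexx.
Qed.

Definition center (X : 'I_n.+1 -> R) : V :=
  \row_c (X c - (\sum_(d < n.+1) X d) / n.+1%:R).

Lemma proot_center X a b : proot (center X) a b = X a - X b.
Proof. by rewrite /proot /co !mxE; ring. Qed.

Lemma Vspace_center X : Vspace (center X).
Proof.
rewrite /Vspace /= /co; under eq_bigr do rewrite mxE.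
by rewrite sumrB sumr_const card_ord -[X in _ - X]mulr_natr divfK ?subrr ?pnatr_eq0.
Qed.

Lemma ball_rowP (p q : V) e :
  ball p e q <-> 0 < e /\ forall c, `|co p c - co q c| < e.
Proof.
split=> -[e0 h]; split=> //.
  by move=> c; have := h ord0 c; rewrite -ball_normE.
by move=> i c; rewrite (ord1 i) -ball_normE; exact: h.
Qed.

End Regions.

Lemma near_same_side (R : realDomainType) (x y k d : R) :
  d <= `|x - k| -> `|y - x| < d -> (k < y) = (k < x) /\ y != k.
Proof.
move=> dx; rewrite ltr_norml => /andP[yx1 yx2].
have [kx|xk] := lerP k x.
  move: dx; rewrite ger0_norm ?subr_ge0 // => dx.
  have ky : k < y by lra.
  by rewrite ky gt_eqF //; split => //; apply/esym; lra.
move: dx; rewrite ltr0_norm ?subr_lt0 // => dx.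
have yk : y < k by lra.
by rewrite (lt_gtF yk) (lt_gtF xk) lt_eqF.
Qed.

Section Facet.
Variables (R : realType) (n m : nat).
Local Notation V := 'rV[R]_(n.+1).
Local Notation C := (@cat_complement R n m).

Lemma complement_margin x : C x -> exists2 d, 0 < d &
  forall (c e : 'I_n.+1) k, (c < e)%N -> (k <= m)%N -> d <= `|proot x c e - k%:R|.
Proof.
move=> Cx.
pose F (t : 'I_n.+1 * 'I_n.+1 * 'I_m.+1) : R :=
  if (t.1.1 < t.1.2)%N then `|proot x t.1.1 t.1.2 - (t.2 : nat)%:R| else 1.
exists (\big[Order.min/1]_t F t) => [|c e k ce km].
  apply/bigmin_gtP; split=> [|[[c e] k] _]; first exact: ltr01.
  rewrite /F /=; case: ifP => // ce.
  by rewrite normr_gt0 subr_eq0 (complement_proot_neq Cx ce) // -ltnS.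
by have := bigmin_le 1 ((c, e), Ordinal (km : (k < m.+1)%N)) F; rewrite /F /= ce.
Qed.

Definition coweight (i : 'I_n) : V := center (fun c : 'I_n.+1 => ((c <= i)%N)%:R).

Lemma proot_coweight i c e :
  proot (coweight i) c e = ((c <= i)%N)%:R - ((e <= i)%N)%:R :> R.
Proof. exact: proot_center. Qed.

Lemma coweight_co_le1 i c : `|co (coweight i) c| <= 1.
Proof.
have ind01 (b : 'I_n.+1) : 0 <= (((b <= i)%N)%:R : R) <= 1.
  by case: (b <= i)%N; rewrite ?lexx ?ler01.
rewrite /co mxE; set M := _ / _.
suff : 0 <= M <= 1.
  by move: (ind01 c) => /andP[? ?] /andP[? ?]; rewrite ler_norml; apply/andP; split; lra.
have n0 : 0 < n.+1%:R :> R by rewrite ltr0n.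
have S0 : 0 <= \sum_(b < n.+1) ((b <= i)%N)%:R :> R.
  by apply: sumr_ge0 => b _; case/andP: (ind01 b).
rewrite /M divr_ge0 ?ler0n //= ler_pdivrMr // mul1r -[n.+1 in X in _ <= X]card_ord -sumr_const.
by apply: ler_sum => b _; case/andP: (ind01 b).
Qed.

Variables (x : V) (i : 'I_n) (d : R).
Local Notation a := (sroot_l i).
Local Notation a' := (sroot_r i).
Hypotheses (Cx : C x) (Dx : dominant_cone x) (gap : m%:R < proot x a a').
Hypotheses (d_gt0 : 0 < d) (margin : forall (c e : 'I_n.+1) k,
  (c < e)%N -> (k <= m)%N -> d <= `|proot x c e - k%:R|).

(* The foot of x on H_{alpha_i, m} along omega_i: this moves exactly the roots
   e_c - e_e with c <= i < e, and those all stay at least m. *)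
Let p := x + (m%:R - proot x a a') *: coweight i.

Lemma proot_sroot_coweight : proot (coweight i) a a' = 1.
Proof. by rewrite proot_coweight /= leqnn ltnn subr0. Qed.

Lemma hyp_foot : hyp a a' m p.
Proof.
split; first exact: Vspace_addZ Cx.1 (Vspace_center _).
by rewrite proot_addZ proot_sroot_coweight; ring.
Qed.

Lemma proot_near q c e : ball p (d / 2) q -> `|proot q c e - proot p c e| < d.
Proof.
move=> /ball_rowP[_ h]; move: (h c) (h e); rewrite /proot !ltr_norml.
by move=> /andP[? ?] /andP[? ?]; apply/andP; split; lra.
Qed.

Lemma dominant_proot_ge0 (c e : 'I_n.+1) : (c <= e)%N -> 0 <= proot x c e.
Proof.
rewrite leq_eqVlt => /orP[/eqP/val_inj ->|]; last exact: Dx.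
by rewrite /proot subrr.
Qed.

Lemma proot_ge_sroot (c e : 'I_n.+1) : (c <= i < e)%N -> proot x a a' <= proot x c e.
Proof.
move=> /andP[ci ie].
have := dominant_proot_ge0 (c := c) (e := a) ci.
have := dominant_proot_ge0 (c := a') (e := e) ie.
by rewrite /proot; lra.
Qed.

Lemma near_foot_above_wall q (c e : 'I_n.+1) : ball p (d / 2) q -> hyp a a' m q ->
  (c <= i < e)%N -> m%:R <= proot q c e.
Proof.
move=> pq Hq /andP[ci ie]; have [/andP[/eqP -> /eqP ->]|ne] := boolP ((c == a) && (e == a')).
  by rewrite Hq.2.
have lower (u v : 'I_n.+1) : (u < v)%N -> d <= proot x u v.
  move=> uv; have := margin uv (leq0n m); rewrite subr0 ger0_norm //.
  exact: dominant_proot_ge0 (ltnW uv).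
have far : proot x a a' + d <= proot x c e.
  move: ne; rewrite negb_and => /orP[/eqP nca|/eqP nea].
    have : (c < a)%N by rewrite ltn_neqAle ci andbT; apply/eqP => /val_inj.
    have := proot_ge_sroot (c := a) (e := e); rewrite leqnn ie => /(_ isT).
    by move=> + /lower; rewrite /proot; lra.
  have : (a' < e)%N by rewrite ltn_neqAle ie andbT; apply/eqP => /val_inj /esym.
  have := proot_ge_sroot (c := c) (e := a'); rewrite ci ltnSn => /(_ isT).
  by move=> + /lower; rewrite /proot; lra.
have := proot_near c e pq; rewrite ltr_norml => /andP[near _].
move: near; rewrite /p proot_addZ proot_coweight /= ci leqNgt ie /=; lra.
Qed.

Lemma shift_component q t : 0 < t -> ball p (d / 2) q -> hyp a a' m q ->
  connected_component C x (q + t *: coweight i).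
Proof.
move=> t0 pq Hq.
have Vy : Vspace (q + t *: coweight i) by apply: Vspace_addZ Hq.1 (Vspace_center _).
have [|Cy sy] := complement_of_sides Cx Vy.
  move=> c e k ce km; have kmR : k%:R <= m%:R :> R by rewrite ler_nat.
  move: (proot_near c e pq); rewrite /p !proot_addZ !proot_coweight.
  case: (leqP c i) => ci; case: (leqP e i) => ei; rewrite ?subrr ?mulr0 ?addr0.
  - exact: near_same_side (margin ce km).
  - move=> _; have := near_foot_above_wall pq Hq (c := c) (e := e); rewrite ci ei => /(_ isT).
    have := proot_ge_sroot (c := c) (e := e); rewrite ci ei => /(_ isT).
    move=> cx cq; have kq : k%:R < proot q c e + t * (1 - 0) by lra.
    by rewrite kq gt_eqF // (lt_le_trans (le_lt_trans kmR gap) cx).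
  - by have := leq_ltn_trans (ltnW ce) (leq_ltn_trans ei ci); rewrite ltnn.
  - exact: near_same_side (margin ce km).
exact: same_sides_component.
Qed.

Lemma foot_supports_facet : supports_facet (connected_component C x) (hyp a a' m).
Proof.
exists p; first exact: hyp_foot.
exists (ball p (d / 2)); first by apply: nbhsx_ballx; rewrite divr_gt0.
move=> q [pq Hq] B /nbhs_ex[r rB].
have r2 : 0 < r%:num / 2 by rewrite divr_gt0.
exists (q + (r%:num / 2) *: coweight i); split; first exact: shift_component.
apply: rB; apply/ball_rowP; split => // c.
rewrite co_addZ opprD addrA subrr add0r normrN normrM gtr0_norm //.
have := coweight_co_le1 i c; have : r%:num / 2 < r%:num by lra.
by nra.
Qed.

End Facet.

Section Gaps.
Variable R : realFieldType.
Implicit Types (s : seq R) (t : R).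

Lemma seq_min s : s != [::] -> exists2 u, u \in s & forall v, v \in s -> u <= v.
Proof.
elim: s => [|x s IH] // _; have [-> | /IH[u us hu]] := eqVneq s [::].
  by exists x; rewrite ?mem_head // => v; rewrite inE => /eqP ->.
have [xu|ux] := leP x u.
  exists x; rewrite ?mem_head // => v; rewrite inE => /orP[/eqP -> //|/hu].
  exact: le_trans.
exists u; rewrite ?inE ?us ?orbT // => v; rewrite inE => /orP[/eqP ->|/hu //].
exact: ltW.
Qed.

Lemma gap_above s t :
  exists t', [/\ t < t', t' \notin s & forall v, v \in s -> (v < t') = (v <= t)].
Proof.
have [U0|/seq_min[u]] := eqVneq [seq v <- s | t < v] [::].
  have le_t v : v \in s -> v <= t.
    have /hasPn hn : ~~ has (fun v => t < v) s by rewrite has_filter U0.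
    by move=> /hn; rewrite leNgt.
  exists (t + 1); split=> [||v /le_t vt]; first lra.
    by apply/negP => /le_t; lra.
  by rewrite vt; apply/idP; lra.
rewrite mem_filter => /andP[tu us] hu.
have between v : v \in s -> t < v -> u <= v by move=> vs tv; apply: hu; rewrite mem_filter tv.
exists ((t + u) / 2); split; first lra.
  by apply/negP => /between; lra.
move=> v vs; have [vt|tv] := leP v t; first by apply/idP; lra.
have := between v vs tv => uv.
by apply/negbTE; rewrite -leNgt; lra.
Qed.

Lemma count_lt_succ s t : uniq s -> t \notin s -> (count (< t) s < size s)%N ->
  exists t', [/\ t < t', t' \notin s & count (< t') s = (count (< t) s).+1].
Proof.
move=> us ts; rewrite -[X in (_ < X)%N](count_predC (< t)) -{1}[count _ _]addn0 ltn_add2l.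
rewrite -has_count => /hasP[v vs /= vt].
have tv : t < v.
  by rewrite lt_neqAle leNgt vt andbT; apply/eqP => e; move: ts; rewrite e vs.
have [|u] := @seq_min [seq w <- s | t < w].
  apply/eqP => e; have : v \in [seq w <- s | t < w] by rewrite mem_filter tv vs.
  by rewrite e.
rewrite mem_filter => /andP[tu us'] hu.
have [t' [ut' t's ht']] := gap_above s u.
exists t'; split=> //; first lra.
have -> : count (< t') s = count (predU (< t) (pred1 u)) s.
  apply: eq_in_count => w ws; rewrite /= ht' // le_eqVlt.
  have [-> | wu] /= := eqVneq w u; first by rewrite orbT.
  have [wt|tw] := ltP w t; first exact: lt_trans wt tu.
  apply/negbTE; rewrite -leNgt; apply: hu; rewrite mem_filter ws lt_neqAle tw !andbT.
  by apply/eqP => e; move: ts; rewrite e ws.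
have noI : count (predI (< t) (pred1 u)) s = 0%N.
  apply/eqP; rewrite -leqn0 leqNgt -has_count; apply/hasPn => w _ /=.
  by apply/negP => /andP[wt /eqP e]; move: wt; rewrite e; lra.
have := count_predUI (< t) (pred1 u) s.
by rewrite noI addn0 (count_uniq_mem u us) us' addn1.
Qed.

Lemma count_lt_exists s L r : uniq s -> L \notin s ->
  (count (< L) s <= r <= size s)%N ->
  exists t, [/\ L < t, t \notin s & count (< t) s = r].
Proof.
move=> us Ls /andP[cr rs]; rewrite -(subnKC cr) in rs *.
elim: (r - _)%N rs => [|k IH] rs.
  have [t [Lt ts ht]] := gap_above s L; exists t; split=> //.
  rewrite addn0; apply: eq_in_count => v vs /=; rewrite ht // le_eqVlt.
  by case: eqVneq => // e; move: Ls; rewrite -e vs.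
rewrite addnS in rs; have [t [Lt ts ct]] := IH (ltnW rs).
have [|t' [tt' t's ct']] := count_lt_succ us ts; first by rewrite ct.
by exists t'; split=> //; [exact: lt_trans tt' | rewrite ct' ct addnS].
Qed.

End Gaps.

Local Close Scope classical_set_scope.

Lemma eq_downset_card (T : finType) (D A B : {set T}) (lt : rel T) :
  A \subset D -> B \subset D ->
  {in D &, forall t t', t != t' -> lt t t' || lt t' t} ->
  (forall t t', t \in D -> t' \in A -> lt t t' -> t \in A) ->
  (forall t t', t \in D -> t' \in B -> lt t t' -> t \in B) ->
  #|A| = #|B| -> A = B.
Proof.
move=> AD BD tot dA dB AB; apply/eqP; rewrite finset.eqEsubset.
wlog suff sub : A B AD BD dA dB AB / A \subset B.
  by apply/andP; split; apply: sub.
apply/fintype.subsetP => t tA; apply/negPn/negP => tB.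
suff : B \proper A by move/proper_card; rewrite AB ltnn.
rewrite properE; apply/andP; split; last by apply/fintype.subsetPn; exists t.
apply/fintype.subsetP => t' t'B.
have [tD t'D] := (fintype.subsetP AD t tA, fintype.subsetP BD t' t'B).
have ne : t != t' by apply: contraNneq tB => ->.
by have /orP[/(dB t t' tD t'B)|/(dA t' t t'D tA)] := tot t t' tD t'D ne; rewrite ?(negPf tB).
Qed.

Lemma count_enum_set (T : finType) (A : {set T}) (P : pred T) :
  count P (enum A) = #|[set u in A | P u]|.
Proof.
rewrite -size_filter -(card_uniqP (filter_uniq _ (enum_uniq _))).
by apply: eq_card => u; rewrite mem_filter mem_enum !inE andbC.
Qed.

Lemma card_ord_gt N (a : nat) : #|[set c : 'I_N | (a < c)%N]| = (N - a.+1)%N.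
Proof.
rewrite cardsE cardE /enum_mem -enumT /= size_filter -(count_map val (fun c => a < c)%N).
rewrite val_enum_ord; elim: N => [|N IH] //.
by rewrite -[N.+1]addn1 iotaD count_cat IH add0n /= addn0; lia.
Qed.

Section Rows.
Variables (R : realFieldType) (n m : nat).
Local Notation I := 'I_n.+1.
Implicit Types (X Y : I -> R) (a b c : I).

Definition generic_pair X b c :=
  0 < X b - X c /\ forall k, (k <= m)%N -> X b - X c != k%:R.

Definition admissible_from (p : nat) X :=
  forall b c, (p <= b)%N -> (b < c)%N -> generic_pair X b c.

Definition row_slots a : {set I * 'I_m} := [set t : I * 'I_m | (a < t.1)%N].

(* The slot (c, j) of row a stands for the hyperplane H_{e_a - e_c, j+1}. *)
Definition row_walls X a : {set I * 'I_m} :=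
  [set t in row_slots a | (t.2 : nat).+1%:R < X a - X t.1].

Definition same_row X Y b := forall c k, (b < c)%N -> (k <= m)%N ->
  (k%:R < X b - X c) = (k%:R < Y b - Y c).

Definition wall_lt X : rel (I * 'I_m) :=
  fun t t' => X t.1 + (t.2 : nat)%:R < X t'.1 + (t'.2 : nat)%:R.

Lemma admissible_fromW p q X : (p <= q)%N -> admissible_from p X -> admissible_from q X.
Proof. by move=> pq hX b c qb; apply: hX; exact: leq_trans qb. Qed.

Lemma generic_pair_ltE X b c (j j' : 'I_m) : generic_pair X b c ->
  (X b + j%:R < X c + j'%:R) = (j < j')%N && ~~ ((j' - j)%:R < X b - X c)
  /\ X b + j%:R != X c + j'%:R.
Proof.
move=> [pos neq]; have [jj|jj] := leqP j' j.
  have : (j' : nat)%:R <= (j : nat)%:R :> R by rewrite ler_nat.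
  move=> h; have lt : X c + j'%:R < X b + j%:R by lra.
  by rewrite (lt_gtF lt) (gt_eqF lt).
have dm : (j' - j <= m)%N by apply: leq_trans (leq_subr _ _) (ltnW (ltn_ord j')).
have -> : (j' : nat)%:R = j%:R + (j' - j)%:R :> R by rewrite -natrD subnKC // ltnW.
move: (neq _ dm); rewrite neq_lt => /orP[h|h].
  have lt : X b + j%:R < X c + (j%:R + (j' - j)%:R) by lra.
  by rewrite lt (lt_gtF h) lt_eqF.
have lt : X c + (j%:R + (j' - j)%:R) < X b + j%:R by lra.
by rewrite (lt_gtF lt) h gt_eqF.
Qed.

Lemma wall_lt_neq X b (t t' : I * 'I_m) : admissible_from b.+1 X ->
  t \in row_slots b -> t' \in row_slots b -> t != t' ->
  X t.1 + (t.2 : nat)%:R != X t'.1 + (t'.2 : nat)%:R.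
Proof.
case: t t' => [c j] [c' j'] hX; rewrite !inE /= => bc bc' ne.
have [cc'|c'c|/val_inj ec] := ltngtP c c'.
- exact: (generic_pair_ltE j j' (hX c c' bc cc')).2.
- by rewrite eq_sym; exact: (generic_pair_ltE j' j (hX c' c bc' c'c)).2.
- by move: ne; rewrite ec (inj_eq (addrI _)) eqr_nat; apply: contra => /eqP/val_inj ->.
Qed.

Lemma wall_lt_total X b : admissible_from b.+1 X ->
  {in row_slots b &, forall t t', t != t' -> wall_lt X t t' || wall_lt X t' t}.
Proof. by move=> hX t t' bt bt' ne; rewrite /wall_lt lt_total // (wall_lt_neq hX). Qed.

Lemma wall_lt_same_rows X Y b :
  admissible_from b.+1 X -> admissible_from b.+1 Y ->
  (forall b', (b < b')%N -> same_row X Y b') ->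
  {in row_slots b &, wall_lt X =2 wall_lt Y}.
Proof.
move=> hX hY same t t' bt bt'.
have [-> | ne] := eqVneq t t'; first by rewrite /wall_lt !ltxx.
have flip Z : admissible_from b.+1 Z -> wall_lt Z t t' = ~~ wall_lt Z t' t.
  by move=> hZ; rewrite /wall_lt ltNge le_eqVlt eq_sym (negPf (wall_lt_neq hZ bt bt' ne)).
wlog lt_tt' : t t' bt bt' ne flip / (t.1 <= t'.1)%N.
  move=> sym; have [|/ltnW] := leqP t.1 t'.1; first exact: sym.
  move=> /(sym t' t bt' bt); rewrite eq_sym => /(_ ne) eq'.
  by rewrite (flip X hX) (flip Y hY) eq' // => Z hZ; rewrite (flip Z hZ) negbK.
case: t t' bt bt' {ne flip} lt_tt' => [c j] [c' j']; rewrite !inE /= => bc bc'.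
rewrite /wall_lt /= leq_eqVlt => /orP[/eqP/val_inj -> | cc']; first by rewrite !ltrD2l.
rewrite (generic_pair_ltE j j' (hX c c' bc cc')).1 (generic_pair_ltE j j' (hY c c' bc cc')).1.
case: ltnP => //= jj; rewrite (same c bc c' (j' - j)%N cc') //.
exact: leq_trans (leq_subr _ _) (ltnW (ltn_ord j')).
Qed.

Lemma row_walls_sub X a : row_walls X a \subset row_slots a.
Proof. by apply/fintype.subsetP => t /setIdP[]. Qed.

Lemma row_walls_down X b t t' : t \in row_slots b -> t' \in row_walls X b ->
  wall_lt X t t' -> t \in row_walls X b.
Proof.
case: t t' => [c j] [c' j']; rewrite !inE /= /wall_lt /= => -> /andP[_ h1] h2.
by move: h1 h2; rewrite -!natr1; lra.
Qed.

(* Row b is an initial segment of row_slots b for wall_lt, which is determined by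
   the rows below b. *)
Lemma same_row_card X Y b : admissible_from b X -> admissible_from b Y ->
  (forall b', (b < b')%N -> same_row X Y b') ->
  #|row_walls X b| = #|row_walls Y b| -> same_row X Y b.
Proof.
move=> hX hY same card_eq.
have [hX' hY'] := (admissible_fromW (leqnSn b) hX, admissible_fromW (leqnSn b) hY).
have walls_eq : row_walls X b = row_walls Y b.
  apply: (eq_downset_card (lt := wall_lt X) (row_walls_sub X b) (row_walls_sub Y b)
    (wall_lt_total hX')) => //; first by move=> t t'; exact: row_walls_down.
  move=> t t' bt t'Y lt; have bt' := fintype.subsetP (row_walls_sub Y b) t' t'Y.
  by apply: row_walls_down t'Y _ => //; rewrite -(wall_lt_same_rows hX' hY' same bt bt').
move=> c [|j] bc jm; first by rewrite (hX b c (leqnn b) bc).1 (hY b c (leqnn b) bc).1.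
have := congr1 (fun S : {set I * 'I_m} => (c, Ordinal jm) \in S) walls_eq.
by rewrite !inE /= bc.
Qed.

Lemma same_rows_card X Y : admissible_from 0 X -> admissible_from 0 Y ->
  (forall a, #|row_walls X a| = #|row_walls Y a|) -> forall b, same_row X Y b.
Proof.
move=> hX hY card_eq b; have [d] := ubnP (n - b); elim: d b => // d IH b bd.
apply: same_row_card (admissible_fromW (leq0n b) hX) (admissible_fromW (leq0n b) hY) _
  (card_eq b).
by move=> b' bb'; apply: IH; have := ltn_ord b'; lia.
Qed.

Lemma card_row_slots a : #|row_slots a| = ((n - a) * m)%N.
Proof.
have -> : row_slots a = finset.setX [set c : I | (a < c)%N] [set: 'I_m].
  by apply/setP => -[c j]; rewrite !inE andbT.
by rewrite cardsX card_ord_gt cardsT card_ord subSS.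
Qed.

Lemma card_row_walls_le X a : (#|row_walls X a| <= (n - a) * m)%N.
Proof. by rewrite -card_row_slots subset_leq_card // row_walls_sub. Qed.

Lemma card_row_walls_mono X a a' : admissible_from a X -> (a <= a')%N ->
  (#|row_walls X a'| <= #|row_walls X a|)%N.
Proof.
move=> hX; rewrite leq_eqVlt => /orP[/eqP/val_inj -> // | aa'].
apply/subset_leq_card/fintype.subsetP => -[c j]; rewrite !inE /= => /andP[a'c h].
rewrite (ltn_trans aa' a'c); have := (hX a a' (leqnn a) aa').1; lra.
Qed.

Lemma card_row_walls_last X : #|row_walls X ord_max| = 0%N.
Proof.
apply/eqP; rewrite cards_eq0; apply/eqP/setP => -[c j]; rewrite !inE /=.
by rewrite ltnNge -ltnS ltn_ord.
Qed.

Lemma row_walls_full X (i : 'I_n) : (0 < m)%N -> admissible_from i.+1 X ->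
  #|row_walls X (sroot_l i)| = ((n - i) * m)%N <->
  m%:R < X (sroot_l i) - X (sroot_r i).
Proof.
move=> m0 hX; set a := sroot_l i; set a' := sroot_r i.
have aa' : (a < a')%N by rewrite /= /bump leq0n.
have -> : ((n - i) * m)%N = #|row_slots a| by rewrite card_row_slots.
split=> [full | gap].
  have walls_eq : row_walls X a = row_slots a.
    by apply/eqP; rewrite eqEcard row_walls_sub full leqnn.
  have mm : (m.-1 < m)%N by rewrite prednK.
  have := congr1 (fun S : {set I * 'I_m} => (a', Ordinal mm) \in S) walls_eq.
  by rewrite !inE /= aa' /= prednK // => ->.
suff -> : row_walls X a = row_slots a by [].
apply/setP => -[c j]; rewrite !inE /=; case ac: (a < c)%N => //=.
have jm : (j.+1%:R <= m%:R :> R) by rewrite ler_nat ltn_ord.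
have [<- | a'c] := eqVneq a' c; first lra.
have : (a' < c)%N by rewrite ltn_neqAle (val_eqE a' c) a'c.
move/(hX a' c (leqnn _)) => [pos _]; lra.
Qed.

Definition wall_heights X a : seq R :=
  [seq X t.1 + (nat_of_ord t.2).+1%:R | t : I * 'I_m <- enum (row_slots a)].

Lemma size_wall_heights X a : size (wall_heights X a) = ((n - a) * m)%N.
Proof. by rewrite size_map -cardE card_row_slots. Qed.

Lemma card_row_wallsE X a : #|row_walls X a| = count (< X a) (wall_heights X a).
Proof.
rewrite count_map count_enum_set; apply: eq_card => -[c j]; rewrite !inE /=.
by rewrite ltrBrDl addrC.
Qed.

Lemma count_wall_heights_next X a b : a.+1 = b :> nat ->
  count (< X b) (wall_heights X a) = #|row_walls X b|.
Proof.
move=> ab; rewrite count_map count_enum_set; apply: eq_card => -[c j]; rewrite !inE /= -ab.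
rewrite ltrBrDl addrC; have [-> | cb] := eqVneq c b.
  by rewrite gtrDr ltNge ler0n !andbF.
by congr (_ && _); rewrite [RHS]ltn_neqAle ab (val_eqE b c) eq_sym cb.
Qed.

Lemma uniq_wall_heights X a : admissible_from a.+1 X -> uniq (wall_heights X a).
Proof.
move=> hX; rewrite map_inj_in_uniq ?enum_uniq // => t t'; rewrite !mem_enum => ta ta' e.
apply/eqP/negPn/negP => /(wall_lt_neq hX ta ta').
by move: e; rewrite -!natr1 !addrA => /addIr ->; rewrite eqxx.
Qed.

Lemma wall_heights_next_notin X a b : a.+1 = b :> nat -> admissible_from b X ->
  X b \notin wall_heights X a.
Proof.
move=> ab hX; apply/mapP => -[[c j]]; rewrite mem_enum inE /= => ac.
have [bc|cb|/val_inj <-] := ltngtP b c.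
- have := (hX b c (leqnn b) bc).2 j.+1 (ltn_ord j); apply: contraNnot => ->.
  by rewrite addrC addKr.
- by move: cb; rewrite -ab ltnS leqNgt ac.
- by move/eqP; rewrite -subr_eq0 opprD addrA subrr add0r oppr_eq0 pnatr_eq0.
Qed.

Definition set_row X a (t : R) : I -> R := fun c => if c == a then t else X c.

Lemma set_row_at X a t : set_row X a t a = t.
Proof. by rewrite /set_row eqxx. Qed.

Lemma set_row_out X a t c : (a < c)%N -> set_row X a t c = X c.
Proof. by move=> ac; rewrite /set_row ifN // neq_ltn ac orbT. Qed.

Lemma row_walls_set_row X a t b : (a < b)%N -> row_walls (set_row X a t) b = row_walls X b.
Proof.
move=> ab; apply/setP => -[c j]; rewrite !inE /=; case bc: (b < c)%N => //=.
by rewrite !set_row_out // (ltn_trans ab bc).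
Qed.

Lemma wall_heights_set_row X a t : wall_heights (set_row X a t) a = wall_heights X a.
Proof.
by apply/eq_in_map => -[c j]; rewrite mem_enum inE /= => ac; rewrite set_row_out.
Qed.

Lemma admissible_set_row X a b t : a.+1 = b :> nat -> admissible_from b X ->
  X b < t -> t \notin wall_heights X a -> admissible_from a (set_row X a t).
Proof.
move=> ab hX bt tH c c'; rewrite leq_eqVlt => /orP[/eqP/val_inj <- ac' | ac cc'].
  rewrite /generic_pair set_row_at (set_row_out _ _ ac').
  have pos : 0 < t - X c'.
    have [bc'|] := ltnP b c'; first by have := (hX b c' (leqnn b) bc').1; lra.
    move=> c'b; have -> : c' = b by apply/val_inj/eqP; rewrite eqn_leq c'b /= -ab.
    lra.
  split=> // -[|j] jm; first by rewrite gt_eqF.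
  apply: contra tH => /eqP e; apply/mapP; exists (c', Ordinal jm).
    by rewrite mem_enum inE.
  by rewrite /= -e addrC subrK.
rewrite /generic_pair !set_row_out ?(ltn_trans ac cc') //.
by apply: hX => //; rewrite -ab.
Qed.

Lemma extend_row X a b r : a.+1 = b :> nat -> admissible_from b X ->
  (#|row_walls X b| <= r <= (n - a) * m)%N ->
  exists t, admissible_from a (set_row X a t) /\ #|row_walls (set_row X a t) a| = r.
Proof.
move=> ab hX; rewrite -(count_wall_heights_next X ab) -(size_wall_heights X a) => r_range.
have hX' : admissible_from a.+1 X by rewrite ab.
have [t [bt tH tr]] := count_lt_exists (uniq_wall_heights hX')
  (wall_heights_next_notin ab hX) r_range.
exists t; split; first exact: admissible_set_row ab hX bt tH.
by rewrite card_row_wallsE wall_heights_set_row set_row_at.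
Qed.

Section Construction.
Variable r : I -> nat.
Hypotheses (r_last : r ord_max = 0%N)
  (r_mono : forall a b, a.+1 = b :> nat -> (r b <= r a)%N)
  (r_bound : forall a, (r a <= (n - a) * m)%N).

Lemma exists_admissible_rows :
  exists X, admissible_from 0 X /\ forall a, #|row_walls X a| = r a.
Proof.
suff rows d : (d <= n)%N -> exists X,
    admissible_from (n - d) X /\ forall b, (n - d <= b)%N -> #|row_walls X b| = r b.
  have [X [hX hr]] := rows n (leqnn n); rewrite subnn in hX hr.
  by exists X; split=> // b; apply: hr.
elim: d => [_ | d IH dn].
  exists (fun=> 0); rewrite subn0; split=> [b c nb bc | b nb].
    by have := ltn_ord c; lia.
  have -> : b = ord_max by apply/val_inj/eqP; rewrite eqn_leq nb -ltnS ltn_ord.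
  by rewrite card_row_walls_last r_last.
have [X [hX hr]] := IH (ltnW dn).
pose a : I := inord (n - d.+1); pose b : I := inord (n - d).
have va : a = (n - d.+1)%N :> nat by rewrite inordK // ltnS leq_subr.
have vb : b = (n - d)%N :> nat by rewrite inordK // ltnS leq_subr.
have ab : a.+1 = b :> nat by rewrite va vb; lia.
have hX' : admissible_from b X by rewrite vb.
have [|t [ht tr]] := extend_row (r := r a) ab hX'.
  by rewrite hr ?vb // r_mono // r_bound.
exists (set_row X a t); split; first by rewrite -va.
move=> c; rewrite leq_eqVlt -va => /orP[/eqP/val_inj <- // | ac].
by rewrite row_walls_set_row // hr // -vb -ab.
Qed.

End Construction.
End Rows.

Local Open Scope classical_set_scope.

Section Main.
Variables (R : realType) (n m : nat).
Hypothesis m_gt0 : (0 < m)%N.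
Local Notation V := 'rV[R]_(n.+1).
Local Notation C := (@cat_complement R n m).
Local Notation I := 'I_n.+1.

Lemma dominant_admissible x : C x -> dominant_cone x -> admissible_from m 0 (co x).
Proof.
move=> Cx Dx b c _ bc; split=> [|k km]; last exact: complement_proot_neq Cx bc km.
have := complement_proot_neq Cx bc (leq0n m); have := Dx b c bc.
by rewrite /proot lt_neqAle eq_sym => -> ->.
Qed.

Lemma dominant_component x : C x -> dominant_cone x ->
  is_dominant_region m (connected_component C x).
Proof.
move=> Cx Dx; split=> [|z xz a b ab]; first by exists x.
have /(_ a b 0%N ab (leq0n m)) := component_same_sides xz.
by have [pos _] := dominant_admissible Cx Dx (leq0n a) ab => /esym; rewrite pos => /ltW.
Qed.

Lemma dominant_regionP (Rg : set V) z : is_dominant_region m Rg -> Rg z ->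
  [/\ C z, dominant_cone z & Rg = connected_component C z].
Proof.
case=> -[x Cx ->] sub xz; split; [exact: connected_component_sub xz | exact: sub |].
exact: same_connected_component.
Qed.

Lemma same_sides_row_walls (x y : V) a :
  same_sides m x y -> row_walls m (co x) a = row_walls m (co y) a.
Proof.
move=> sxy; apply/setP => -[c j]; rewrite !inE /=; case ac: (a < c)%N => //=.
exact: (sxy a c j.+1 ac (ltn_ord j)).
Qed.

Definition region_point (Rg : dominant_regions R n m) : V := get (sval Rg).

Lemma region_pointP Rg : sval Rg (region_point Rg).
Proof.
have [[x Cx eRg] _] := proj2_sig Rg; apply: getPex; exists x.
by rewrite eRg; exact: connected_component_refl.
Qed.

Lemma region_point_spec Rg : let x := region_point Rg in
  [/\ C x, dominant_cone x & sval Rg = connected_component C x].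
Proof. exact: dominant_regionP (proj2_sig Rg) (region_pointP Rg). Qed.

Definition region_rows (Rg : dominant_regions R n m) : {ffun 'I_n -> nat} :=
  [ffun i => #|row_walls m (co (region_point Rg)) (sroot_l i)|].

Lemma region_rows_bounded Rg : is_bounded_partition m (region_rows Rg).
Proof.
have [Cx Dx _] := region_point_spec Rg; have hX := dominant_admissible Cx Dx.
apply/andP; split; apply/forallP => i.
  apply/forallP => j; apply/implyP => ij; rewrite !ffunE.
  by apply: card_row_walls_mono; first exact: admissible_fromW (leq0n _) hX.
by rewrite ffunE mulnC card_row_walls_le.
Qed.

Definition region_partition (Rg : dominant_regions R n m) : bounded_partitions n m :=
  exist _ (region_rows Rg) (region_rows_bounded Rg).

Lemma ord_maxVsroot_l (a : I) : a = ord_max \/ exists i : 'I_n, a = sroot_l i.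
Proof.
have [an|na] := ltnP a n; first by right; exists (Ordinal an); apply: val_inj.
by left; apply/val_inj/eqP; rewrite eqn_leq na -ltnS ltn_ord.
Qed.

Lemma dominant_regions_sval_inj : injective (@sval _ (@is_dominant_region R n m)).
Proof. by move=> [Rg1 p1] [Rg2 p2] /= E; apply: eq_exist. Qed.

Lemma region_partition_inj : injective region_partition.
Proof.
move=> Rg1 Rg2 /(congr1 sval) /= e.
have [C1 D1 E1] := region_point_spec Rg1; have [C2 D2 E2] := region_point_spec Rg2.
have cards a :
    #|row_walls m (co (region_point Rg1)) a| = #|row_walls m (co (region_point Rg2)) a|.
  have [-> | [i ->]] := ord_maxVsroot_l a; first by rewrite !card_row_walls_last.
  by have := congr1 (fun f : {ffun 'I_n -> nat} => f i) e; rewrite !ffunE.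
have rows := same_rows_card (dominant_admissible C1 D1) (dominant_admissible C2 D2) cards.
apply: dominant_regions_sval_inj; rewrite E1 E2; apply: same_connected_component.
by apply: same_sides_component => // a b k ab km; exact: rows.
Qed.

Lemma admissible_center (X : I -> R) : admissible_from m 0 X ->
  C (center X) /\ dominant_cone (center X).
Proof.
move=> hX; split=> [|a b ab]; last by rewrite proot_center ltW // (hX a b isT ab).1.
split=> [|a b k [ab km] [_]]; first exact: Vspace_center.
by rewrite proot_center; apply/eqP; exact: (hX a b isT ab).2.
Qed.

Lemma row_walls_center (X : I -> R) a : row_walls m (co (center X)) a = row_walls m X a.
Proof. by apply/setP => -[c j]; rewrite !inE -!/(proot _ _ _) proot_center. Qed.

Lemma region_partition_surj lam : exists Rg, region_partition Rg = lam.
Proof.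
case: lam => lam lamP; have /andP[/forallP mono /forallP bound] := lamP.
pose r (a : I) := odflt 0%N (omap lam (insub (a : nat))).
have r_sroot i : r (sroot_l i) = lam i by rewrite /r /= valK.
have r_last : r ord_max = 0%N by rewrite /r insubF //= ltnn.
have r_mono (a b : I) : a.+1 = b :> nat -> (r b <= r a)%N.
  move=> ab; have [-> | [j bj]] := ord_maxVsroot_l b; first by rewrite r_last.
  have ja : (j : nat) = a.+1 by rewrite ab bj.
  have an : (a < n)%N by rewrite -ja; exact: ltnW (ltn_ord j).
  have -> : a = sroot_l (Ordinal an) by apply: val_inj.
  by rewrite bj !r_sroot; apply: (implyP (forallP (mono _) j)); rewrite /= ja.
have r_bound (a : I) : (r a <= (n - a) * m)%N.
  by have [-> | [i ->]] := ord_maxVsroot_l a; rewrite ?r_last // r_sroot mulnC.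
have [X [hX hr]] := exists_admissible_rows R r_last r_mono r_bound.
have [Cx Dx] := admissible_center hX.
exists (exist _ _ (dominant_component Cx Dx)); apply/val_inj/ffunP => i.
have /component_same_sides sides := region_pointP (exist _ _ (dominant_component Cx Dx)).
by rewrite ffunE -(same_sides_row_walls _ sides) row_walls_center hr r_sroot.
Qed.

Lemma dominant_gap_facet x i : C x -> dominant_cone x ->
  m%:R < proot x (sroot_l i) (sroot_r i) ->
  supports_facet (connected_component C x) (hyp (sroot_l i) (sroot_r i) m).
Proof.
move=> Cx Dx gap; have [d d0 margin] := complement_margin Cx.
exact: foot_supports_facet Cx Dx gap d0 margin.
Qed.

Lemma separating_wall_full_row i Rg : separating_wall m (sval Rg) (sroot_l i) (sroot_r i) m <->
  sval (region_partition Rg) i = ((n - i) * m)%N.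
Proof.
have [Cx Dx E] := region_point_spec Rg.
have hX := admissible_fromW (leq0n i.+1) (dominant_admissible Cx Dx).
rewrite /= ffunE (row_walls_full m_gt0 hX) -/(proot _ _ _).
have p0 : proot (0 : V) (sroot_l i) (sroot_r i) = 0 by rewrite /proot /co !mxE subrr.
have m0 : 0 < m%:R :> R by rewrite ltr0n.
split=> [[_ _ /(_ _ (region_pointP Rg))] | gap]; first by rewrite p0; nra.
split=> //; first by rewrite E; exact: dominant_gap_facet.
have aa' : (sroot_l i < sroot_r i)%N by rewrite /= /bump leq0n.
move=> y; rewrite E p0 => /component_same_sides /(_ _ _ _ aa' (leqnn m)).
by rewrite gap => /esym gap_y; nra.
Qed.

End Main.

Theorem theorem1p3 (R : realType) (n m : nat) (hn : (0 < n)%N) (hm : (0 < m)%N) :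
  exists phi : dominant_regions R n m -> bounded_partitions n m,
    bijective phi /\
    forall (i : 'I_n) (Rg : dominant_regions R n m),
      separating_wall m (proj1_sig Rg) (sroot_l i) (sroot_r i) m <->
      proj1_sig (phi Rg) i = ((n - i) * m)%N.
Proof.
exists (@region_partition R n m); split; last exact: separating_wall_full_row hm.
pose inv lam := projT1 (cid (@region_partition_surj R n m lam)).
have invK lam : region_partition (inv lam) = lam.
  exact: projT2 (cid (@region_partition_surj R n m lam)).
by exists inv => [Rg|//]; apply: region_partition_inj.
Qed.
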